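(* Let $(M^{4n},g)$ be a quaternionic Kähler manifold and $r$ an integer with $n+2r\geq 0$. The Chern character of $\mathrm{Sym}^{n+2r}H$ is $$\mathrm{ch}\,\mathrm{Sym}^{n+2r}H\;=\;\sum_{l\geq 0}\frac{2^{2l+1}}{(2l+1)!}\,B_{2l+1}\!\left(r+\frac{n+2}{2}\right)u^l,$$ where $u:=p_1(H)$ and $B_{2l+1}(x)$ is the $(2l+1)$-th Bernoulli polynomial.
   Context: A quaternionic Kähler manifold is a Riemannian $4n$-manifold with holonomy in $\mathbf{Sp}(1)\cdot\mathbf{Sp}(n)$; $H$ is the (locally defined) rank-2 bundle associated to the standard representation of $\mathbf{Sp}(1)$. Characteristic classes are computed formally via the splitting principle: $H=\ell\oplus\ell^{-1}$ with $c_1(\ell)=\pm\sqrt{u}$, i.e. $u=p_1(H)=c_1(\ell)^2$; equivalently $4u=p_1(\mathrm{Sym}^2H)$, which is a globally defined class. Bernoulli polynomials are characterized by $B_{\mu+1}(w+1)-B_{\mu+1}(w)=(\mu+1)w^\mu$ together with the standard normalization $B_k(x)=x^k-\frac12\binom k1x^{k-1}+\frac16\binom k2x^{k-2}-\dots$. *)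

From mathcomp Require Import all_boot all_order all_algebra.
Set Implicit Arguments. Unset Strict Implicit. Unset Printing Implicit Defensive.
Import Order.TTheory GRing.Theory Num.Theory.
Local Open Scope ring_scope.

(* Bernoulli numbers b_0 = 1, sum_{j<=k} C(k+1,j) b_j = 0 for k >= 1,
   i.e. b_k = -1/(k+1) * sum_{j<k} C(k+1,j) b_j  (so b_1 = -1/2). *)
Fixpoint bern_seq (k : nat) : seq rat :=
  match k with
  | 0 => [:: 1]
  | k'.+1 =>
      let s := bern_seq k' in
      rcons s (- (k'.+2%:R)^-1 * \sum_(j < k'.+1) ('C(k'.+2, j))%:R * nth 0 s j)
  end.

Definition bernoulli_number (k : nat) : rat := nth 0 (bern_seq k) k.

Definition bernoulli_poly (k : nat) : {poly rat} :=
  \sum_(j < k.+1) (('C(k, j))%:R * bernoulli_number j) *: 'X^(k - j).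

(* Splitting principle: H = l + l^{-1}, x := c_1(l), u = p_1(H) = x^2.
   Sym^m H = sum_{k=0}^m l^{m-2k}, whose Chern roots are (m - 2k) x. *)
Definition sym_chern_roots (m : nat) : seq int :=
  [seq (m%:Z - 2 * k%:Z) | k <- iota 0 m.+1].

(* ch Sym^m H = sum over Chern roots w x of exp(w x), as a formal power
   series in x; this is its coefficient of x^j. *)
Definition ch_Sym_coef (m j : nat) : rat :=
  (\sum_(w <- sym_chern_roots m) (w%:~R : rat) ^+ j) / (j`!)%:R.

From mathcomp Require Import all_boot all_order all_algebra ring.
Set Implicit Arguments. Unset Strict Implicit. Unset Printing Implicit Defensive.
Import Order.TTheory GRing.Theory Num.Theory.
Local Open Scope ring_scope.

(* Splitting H = l + l^-1 with x = c_1(l), the Chern roots of Sym^m H are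
   (m - 2k) x for 0 <= k <= m, so j! times the coefficient of x^j in
   ch Sym^m H is the power sum  sum_k (m - 2k)^j = (-2)^j sum_k (1 - y + k)^j
   with y = m/2 + 1 = r + (n+2)/2.  Telescoping with the difference formula
   B_(j+1)(t+1) - B_(j+1)(t) = (j+1) t^j turns (j+1) sum_k (1 - y + k)^j into
   B_(j+1)(y) - B_(j+1)(1 - y) = (1 + (-1)^j) B_(j+1)(y), by the reflection
   formula B_k(1 - t) = (-1)^k B_k(t).  Hence the odd coefficients vanish and
   the coefficient of x^(2l) = u^l is 2^(2l+1) B_(2l+1)(y) / (2l+1)!.
   Both Bernoulli identities rest on B_(k+1)' = (k+1) B_k: the difference
   formula by induction on k, and the reflection formula because
   P_k(t) = (-1)^k B_k(1 - t) - B_k(t) is 1-periodic, hence constant, so that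
   (k+1) P_k = P_(k+1)' = 0. *)

Section PolyConstant.
Variable R : numDomainType.
Implicit Types p : {poly R}.

Lemma deriv_eq0_polyC p : p^`() = 0 -> p = (p.[0])%:P.
Proof.
move=> dp0; apply/polyP => -[|i]; rewrite coefC ?horner_coef0 //=.
have /eqP := congr1 (fun q : {poly R} => q`_i) dp0.
by rewrite coef_deriv coef0 mulrn_eq0 => /eqP.
Qed.

Lemma periodic_polyC p : (forall x, p.[x + 1] = p.[x]) -> p = (p.[0])%:P.
Proof.
move=> p1; pose q := p - (p.[0])%:P.
suff /eqP : q = 0 by rewrite subr_eq0 => /eqP.
apply: (@roots_geq_poly_eq0 _ q [seq i%:R | i <- iota 0 (size q)]).
- apply/allP => _ /mapP [i _ ->]; rewrite rootE !hornerE subr_eq0.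
  by apply/eqP; elim: i => [|i IH] //; rewrite mulrSr p1.
- by rewrite map_inj_uniq ?iota_uniq // => i j /eqP; rewrite eqr_nat => /eqP.
- by rewrite size_map size_iota.
Qed.

End PolyConstant.

Local Notation b := bernoulli_number.
Local Notation B := bernoulli_poly.

Lemma size_bern_seq k : size (bern_seq k) = k.+1.
Proof. by elim: k => //= k IH; rewrite size_rcons IH. Qed.

Lemma nth_bern_seq k j : (j <= k)%N -> nth 0 (bern_seq k) j = b j.
Proof.
elim: k => [|k IH]; first by rewrite leqn0 => /eqP ->.
rewrite leq_eqVlt => /predU1P [-> //| ltjk].
by rewrite /= nth_rcons size_bern_seq ltjk IH.
Qed.

Lemma bernoulli_numberS k :
  b k.+1 = - (k.+2%:R)^-1 * \sum_(j < k.+1) ('C(k.+2, j))%:R * b j.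
Proof.
rewrite {1}/bernoulli_number /= nth_rcons size_bern_seq ltnn eqxx.
by congr (_ * _); apply: eq_bigr => j _; rewrite nth_bern_seq // -ltnS.
Qed.

Lemma sum_bernoulli_number N :
  (2 <= N)%N -> \sum_(j < N) ('C(N, j))%:R * b j = 0.
Proof.
case: N => [|[|k]] // _; rewrite big_ord_recr /= binSn bernoulli_numberS.
by rewrite mulrA mulrN mulrV ?unitfE ?pnatr_eq0 // mulN1r subrr.
Qed.

Lemma horner_bernoulli_poly K x :
  (B K).[x] = \sum_(j < K.+1) ('C(K, j))%:R * b j * x ^+ (K - j).
Proof.
by rewrite horner_sum; apply: eq_bigr => j _; rewrite hornerZ hornerXn.
Qed.

Lemma bernoulli_poly0 : B 0 = 1.
Proof. by rewrite /bernoulli_poly big_ord1 /= bin0 mul1r expr0 scale1r. Qed.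

Lemma bernoulli_poly_horner0 K : (B K).[0] = b K.
Proof.
rewrite horner_bernoulli_poly big_ord_recr /= subnn binn mulr1 mul1r big1 ?add0r //.
by move=> j _; rewrite expr0n subn_eq0 leqNgt ltn_ord mulr0.
Qed.

Lemma bernoulli_poly_horner1 K : (B K).[1] = b K + (K == 1)%:R.
Proof.
rewrite horner_bernoulli_poly; under eq_bigr do rewrite expr1n mulr1.
case: K => [|[|k]].
- by rewrite big_ord1 bin0 mul1r addr0.
- by rewrite !big_ord_recr big_ord0 /= add0r bin1 bin0 !mul1r -[b 0]/1 addrC.
- by rewrite big_ord_recr /= sum_bernoulli_number // add0r binn mul1r addr0.
Qed.

Lemma deriv_bernoulli_poly K : (B K.+1)^`() = K.+1%:R *: B K.
Proof.
rewrite /bernoulli_poly raddf_sum big_ord_recr /= subnn derivZ derivC scaler0 addr0.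
rewrite scaler_sumr; apply: eq_bigr => j _.
have le_jK : (j <= K)%N by rewrite -ltnS.
rewrite derivZ derivXn scalerA -scaler_nat scalerA subSn // succnK.
by rewrite mulrAC -natrM mulrA -natrM (mul_bin_down K.+1) subSn // mulnC.
Qed.

Lemma bernoulli_poly_diff K x : (B K).[x + 1] - (B K).[x] = x ^+ K.-1 *+ K.
Proof.
pose D k := B k \Po ('X + 1) - B k - 'X^(k.-1) *+ k.
have D_horner k y : (D k).[y] = (B k).[y + 1] - (B k).[y] - y ^+ k.-1 *+ k.
  by rewrite !hornerE horner_comp hornerMn !hornerE.
suff /(congr1 (horner^~ x)) : D K = 0.
  by rewrite D_horner hornerC => /eqP; rewrite subr_eq0 => /eqP.
elim: K => [|K IH]; first by rewrite /D bernoulli_poly0 comp_polyC subrr subr0.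
have dD : (D K.+1)^`() = D K *+ K.+1.
  rewrite /D !derivB deriv_comp derivD derivX derivC addr0 mulr1.
  by rewrite deriv_bernoulli_poly comp_polyZ derivMn derivXn -!scaler_nat !scalerBr.
move: dD; rewrite IH mul0rn => /deriv_eq0_polyC ->.
rewrite D_horner add0r bernoulli_poly_horner1 bernoulli_poly_horner0 [b _ + _]addrC addrK.
by case: K {IH} => [|K]; rewrite /= ?expr0n /= ?mulr1n ?mul0rn subrr.
Qed.

Lemma bernoulli_poly_reflect K x : (B K).[1 - x] = (-1) ^+ K * (B K).[x].
Proof.
pose P k : {poly rat} := (-1) ^+ k *: (B k \Po (1 - 'X)) - B k.
have P_horner k (y : rat) : (P k).[y] = (-1) ^+ k * (B k).[1 - y] - (B k).[y].
  by rewrite !hornerE horner_comp !hornerE.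
have sign_shift k (y : rat) :
    (-1) ^+ k * ((- y) ^+ k.-1 *+ k) = - (y ^+ k.-1 *+ k).
  case: k => [|k] /=; first by rewrite !mulr0n mulr0 oppr0.
  by rewrite exprS mulN1r mulNr [(- y) ^+ k]exprNn -mulrnAr signrMK.
have P_periodic k (y : rat) : (P k).[y + 1] = (P k).[y].
  have /eqP := bernoulli_poly_diff k y; rewrite subr_eq => /eqP Bky1.
  have /eqP := bernoulli_poly_diff k (- y); rewrite subr_eq => /eqP Bk1y.
  rewrite !P_horner (_ : 1 - (y + 1) = - y); last by ring.
  by rewrite Bky1 [1 - y]addrC Bk1y mulrDr sign_shift; ring.
have dP k : (P k.+1)^`() = k.+1%:R *: P k.
  rewrite /P derivB derivZ deriv_comp deriv_bernoulli_poly comp_polyZ.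
  rewrite derivB derivC derivX sub0r mulrN1 scalerBr scalerN -scaleNr exprS mulN1r.
  by rewrite opprK !scalerA mulrC.
suff /(congr1 (horner^~ x)) : P K = 0.
  by rewrite P_horner hornerC => /eqP; rewrite subr_eq0 => /eqP <-; rewrite signrMK.
have := dP K; rewrite (periodic_polyC (P_periodic K.+1)) derivC => /esym/eqP.
by rewrite scaler_eq0 pnatr_eq0 => /eqP.
Qed.

Lemma sum_pow_bernoulli_poly j m x :
  \sum_(0 <= k < m) (x + k%:R) ^+ j *+ j.+1 = (B j.+1).[x + m%:R] - (B j.+1).[x].
Proof.
rewrite (@telescope_sumr_eq _ _ _ (fun k => (B j.+1).[x + k%:R])) /= ?mulr0n ?addr0 //.
by move=> k _; rewrite [k.+1%:R]mulrSr addrA bernoulli_poly_diff.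
Qed.

Lemma sum_sym_chern_roots_pow (R : pzRingType) m j :
  \sum_(w <- sym_chern_roots m) (w%:~R : R) ^+ j
  = \sum_(0 <= k < m.+1) (m%:R - 2 * k%:R) ^+ j.
Proof. by rewrite big_map; apply: eq_bigr => k _; rewrite intrD intrN intrM. Qed.

Lemma sum_sym_chern_roots_powE m j :
  (\sum_(w <- sym_chern_roots m) (w%:~R : rat) ^+ j) * j.+1%:R
  = (-2) ^+ j * (1 + (-1) ^+ j) * (B j.+1).[m%:R / 2 + 1].
Proof.
set y : rat := m%:R / 2 + 1.
have shift k : m%:R - 2 * k%:R = -2 * (1 - y + k%:R) by rewrite /y; field.
have end_shift : 1 - y + m.+1%:R = y by rewrite /y mulrSr; field.
rewrite sum_sym_chern_roots_pow; under eq_bigr do rewrite shift exprMn.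
rewrite -mulr_sumr mulr_natr -mulrnAr -sumrMnl sum_pow_bernoulli_poly end_shift.
by rewrite bernoulli_poly_reflect exprS; ring.
Qed.

Lemma ch_Sym_coefE m j : ch_Sym_coef m j
  = (-2) ^+ j * (1 + (-1) ^+ j) / (j.+1)`!%:R * (B j.+1).[m%:R / 2 + 1].
Proof.
have Sj := sum_sym_chern_roots_powE m j.
have jS_neq0 : j.+1%:R != 0 :> rat by rewrite pnatr_eq0.
have fact_neq0 : j`!%:R != 0 :> rat by rewrite pnatr_eq0 -lt0n fact_gt0.
rewrite /ch_Sym_coef -[\sum_(w <- _) _](mulfK jS_neq0) Sj factS natrM.
by field; rewrite fact_neq0 -mulrS jS_neq0.
Qed.

Theorem lemma2p1 (n : nat) (r : int) (hnr : 0 <= n%:Z + 2 * r) :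
  forall l : nat,
    ch_Sym_coef (absz (n%:Z + 2 * r)) l.*2
      = (2 ^+ l.*2.+1 / (l.*2.+1)`!%:R)
        * (bernoulli_poly l.*2.+1).[r%:~R + (n%:R + 2) / 2]
    /\ ch_Sym_coef (absz (n%:Z + 2 * r)) l.*2.+1 = 0.
Proof.
move=> l; set m := absz _.
have -> : r%:~R + (n%:R + 2) / 2 = m%:R / 2 + 1 :> rat.
  by rewrite [m%:R]pmulrn /m gez0_abs // intrD intrM -!pmulrn; field.
have sign_even : (-1) ^+ l.*2 = 1 :> rat by rewrite -signr_odd odd_double.
rewrite !ch_Sym_coefE; split.
  by rewrite exprNn sign_even mul1r exprS; ring.
by rewrite [(-1) ^+ l.*2.+1]exprS sign_even mulr1 subrr mulr0 !mul0r.
Qed.
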